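(* Let $D$ be a bounded complete domain quantified by a partial metric $p$ with values in $[0,1]$, and let $D_\infty$ be Scott's inverse-limit construction over $D$ (described in the context). For each $n$ fix an enumeration $(a^n_i)_{i\geq1}$ of a countable basis of $D_n$, and define partial metrics $p_0:=p$ on $D_0$, $p_{n+1}(f,g):=\sum_{i=1}^\infty 2^{-i}p_n\big(f(a^n_i),g(a^n_i)\big)$ on $D_{n+1}$, and on $D_\infty$ $$p_\infty(x,y):=\sum_{n=1}^\infty 2^{-n}p_n(x_n,y_n).$$ Then $p_\infty$ quantifies the Scott topology of $D_\infty$, i.e. $\mathcal O_\sigma(D_\infty)=\mathcal O_{p_\infty}(D_\infty)$.
   Context: A partial metric (PM) on $X$ is $p:X\times X\to[0,+\infty]$ with $p(x,x)\leq p(x,y)$; $p(x,x)=p(x,y)=p(y,y)\Rightarrow x=y$; $p(x,y)=p(y,x)$; $p(x,y)\leq p(x,z)+p(z,y)-p(z,z)$. Open balls $B^p_\epsilon(x)=\{y\mid p(y,x)<p(x,x)+\epsilon\}$; $\mathcal O_p(X)$ is the topology of unions of open balls; a dcpo is quantified by $p$ if its Scott topology equals $\mathcal O_p$. A domain is a continuous dcpo with a countable basis; bounded complete means every finite subset with an upper bound has a join. Construction: $D_0:=D$, $D_{n+1}:=$ the domain of Scott-continuous functions $D_n\to D_n$ (pointwise order). Maps $i_0(x):=\lambda y.x$, $j_0(f):=f(\bot)$, $i_{n+1}(f):=i_n\circ f\circ j_n$, $j_{n+1}(g):=j_n\circ g\circ i_n$ (so $j_n\circ i_n=\mathrm{id}$,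 $i_n\circ j_n\leq\mathrm{id}$). $D_\infty:=\{x\in\prod_{n\geq0}D_n\mid \forall n,\ x_n=j_n(x_{n+1})\}$ with componentwise order; $x_n$ denotes the $n$-th component of $x\in D_\infty$. *)

From Stdlib Require Import Reals List ClassicalEpsilon.
From Coquelicot Require Import Coquelicot.
Open Scope R_scope.

Record Poset := MkPoset { car :> Type; ord : car -> car -> Prop }.
Arguments ord {p} _ _.

Section Order.
Variable P : Poset.

Definition is_partial_order : Prop :=
  (forall x : P, ord x x) /\
  (forall x y : P, ord x y -> ord y x -> x = y) /\
  (forall x y z : P, ord x y -> ord y z -> ord x z).

Definition upper_bound (S : P -> Prop) (u : P) : Prop := forall x, S x -> ord x u.

Definition is_sup (S : P -> Prop) (s : P) : Prop :=
  upper_bound S s /\ forall u, upper_bound S u -> ord s u.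

Definition directed (S : P -> Prop) : Prop :=
  (exists x, S x) /\
  (forall x y, S x -> S y -> exists z, S z /\ ord x z /\ ord y z).

Definition is_dcpo : Prop :=
  is_partial_order /\ forall S, directed S -> exists s, is_sup S s.

Definition way_below (x y : P) : Prop :=
  forall S s, directed S -> is_sup S s -> ord y s -> exists d, S d /\ ord x d.

Definition is_basis (B : P -> Prop) : Prop :=
  forall x, directed (fun b => B b /\ way_below b x) /\
            is_sup (fun b => B b /\ way_below b x) x.

Definition countable_set (B : P -> Prop) : Prop :=
  exists e : nat -> P, forall b, B b -> exists n, e n = b.

Definition is_domain : Prop :=
  is_dcpo /\ exists B, countable_set B /\ is_basis B.

Definition bounded_complete : Prop :=
  forall l : list P, (exists u, upper_bound (fun x => In x l) u) ->
                     exists s, is_sup (fun x => In x l) s.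

Definition scott_open (U : P -> Prop) : Prop :=
  (forall x y, U x -> ord x y -> U y) /\
  (forall S s, directed S -> is_sup S s -> U s -> exists d, S d /\ U d).

Definition is_partial_metric (p : P -> P -> R) : Prop :=
  (forall x y, 0 <= p x y) /\
  (forall x y, p x x <= p x y) /\
  (forall x y, p x x = p x y -> p x y = p y y -> x = y) /\
  (forall x y, p x y = p y x) /\
  (forall x y z, p x y <= p x z + p z y - p z z).

Definition pball (p : P -> P -> R) (x : P) (eps : R) (y : P) : Prop :=
  p y x < p x x + eps.

Definition p_open (p : P -> P -> R) (U : P -> Prop) : Prop :=
  forall x, U x -> exists y eps, 0 < eps /\ pball p y eps x /\
                                 (forall z, pball p y eps z -> U z).

Definition quantifies (p : P -> P -> R) : Prop :=
  is_partial_metric p /\ (forall U, scott_open U <-> p_open p U).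

Definition scott_continuous (f : P -> P) : Prop :=
  forall S s, directed S -> is_sup S s ->
    is_sup (fun y => exists x, S x /\ y = f x) (f s).

End Order.

Lemma id_scott_continuous (P : Poset) : scott_continuous P (fun x => x).
Proof.
  intros S s _ [Hu Hl]; split.
  - intros y [x [Hx ->]]; auto.
  - intros u Hu'; apply Hl; intros x Hx; apply Hu'; eauto.
Qed.

Definition FunP (P : Poset) : Poset :=
  MkPoset {f : P -> P | scott_continuous P f}
          (fun f g => forall x, ord (proj1_sig f x) (proj1_sig g x)).

(** All maps to which this is applied
    below are Scott-continuous, so the (classical) fallback branch is never
    taken; it only serves to make the definitions total before the
    continuity proofs. *)
Definition mkfun (P : Poset) (f : P -> P) : FunP P :=
  match excluded_middle_informative (scott_continuous P f) with
  | left H => exist _ f H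
  | right _ => exist _ (fun x => x) (id_scott_continuous P)
  end.

Fixpoint Dn (D : Poset) (n : nat) : Poset :=
  match n with
  | O => D
  | S m => FunP (Dn D m)
  end.

Definition app {P : Poset} (f : FunP P) (x : P) : P := proj1_sig f x.

Fixpoint ij (D : Poset) (bot : D) (n : nat)
  : (Dn D n -> Dn D (S n)) * (Dn D (S n) -> Dn D n) :=
  match n return (Dn D n -> Dn D (S n)) * (Dn D (S n) -> Dn D n) with
  | O => (fun x : D => mkfun D (fun _ => x),
          fun f : FunP D => app f bot)
  | S m =>
      let i := fst (ij D bot m) in
      let j := snd (ij D bot m) in
      (fun f : FunP (Dn D m) => mkfun (Dn D (S m)) (fun y => i (app f (j y))),
       fun g : FunP (Dn D (S m)) => mkfun (Dn D m) (fun y => j (app g (i y))))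
  end.

Definition i_n (D : Poset) (bot : D) (n : nat) := fst (ij D bot n).
Definition j_n (D : Poset) (bot : D) (n : nat) := snd (ij D bot n).

Definition Dinf (D : Poset) (bot : D) : Poset :=
  MkPoset {x : forall n, Dn D n | forall n, x n = j_n D bot n (x (S n))}
          (fun x y => forall n, ord (proj1_sig x n) (proj1_sig y n)).

(** partial metrics p_n; [a n i] is a^n_{i+1} *)
Fixpoint pn (D : Poset) (p : D -> D -> R) (a : forall n, nat -> Dn D n) (n : nat)
  : Dn D n -> Dn D n -> R :=
  match n return Dn D n -> Dn D n -> R with
  | O => p
  | S m => fun f g =>
      Series (fun i => (/ 2) ^ (S i) * pn D p a m (app f (a m i)) (app g (a m i)))
  end.

Definition pinf (D : Poset) (bot : D) (p : D -> D -> R) (a : forall n, nat -> Dn D n)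
  (x y : Dinf D bot) : R :=
  Series (fun k => (/ 2) ^ (S k) *
                   pn D p a (S k) (proj1_sig x (S k)) (proj1_sig y (S k))).

(* Call a [0,1]-valued partial metric Scott-adapted if it is antitone and can be
   approximated along directed sups (so that its balls are Scott open), and if for
   every [b] way below [x] a small enough ball around [x] lies above [b].  The first
   property survives weighted sums of the form sum_i 2^-(i+1) q_i, since it can be
   checked on finitely many terms up to an arbitrarily small tail.  By induction every
   p_n is Scott-adapted: a function [f] is the directed sup of the finite joins of step
   functions [a_i |-> c] with [c] way below [f a_i], and the finitely many constraints
   [c <= g a_i] describing such a join are forced on every [g] close enough to [f].
   On D_infinity balls are Scott open for the same reason as above; conversely a Scott
   open [U] containing [x] contains some [iota_(n+1) b] with [b] a basis element way
   below [x_(n+1)], and a ball around [x] of radius 2^-(n+1) delta forces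
   [b <= z_(n+1)], hence [iota_(n+1) b <= z]. *)

From Stdlib Require Import Reals.
From Coquelicot Require Import Coquelicot.
From Stdlib Require Import Lra Lia ClassicalEpsilon FunctionalExtensionality ProofIrrelevance.
Open Scope R_scope.

(** * Weighted sums *)

Definition wsum (u : nat -> R) : R := Series (fun i => (/ 2) ^ (S i) * u i).

Definition bounded_seq (u : nat -> R) : Prop := exists M, forall i, Rabs (u i) <= M.

Lemma half_pow_pos i : 0 < (/ 2) ^ i.
Proof. apply pow_lt; lra. Qed.

Lemma half_pow_small eps : 0 < eps -> exists N, (/ 2) ^ N < eps.
Proof.
  intros Heps.
  destruct (pow_lt_1_zero (/ 2) ltac:(rewrite Rabs_pos_eq; lra) eps Heps) as [N HN].
  exists N. specialize (HN N (le_n _)).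
  rewrite Rabs_pos_eq in HN by (left; apply half_pow_pos). exact HN.
Qed.

Lemma bounded_seq_unit u : (forall i, 0 <= u i <= 1) -> bounded_seq u.
Proof. intros H; exists 1; intros i; specialize (H i); rewrite Rabs_pos_eq; lra. Qed.

Lemma bounded_seq_const c : bounded_seq (fun _ => c).
Proof. exists (Rabs c); intros; apply Rle_refl. Qed.

Lemma bounded_seq_plus u v :
  bounded_seq u -> bounded_seq v -> bounded_seq (fun i => u i + v i).
Proof.
  intros [M HM] [N HN]; exists (M + N); intros i.
  eapply Rle_trans; [apply Rabs_triang|]. specialize (HM i); specialize (HN i); lra.
Qed.

Lemma bounded_seq_minus u v :
  bounded_seq u -> bounded_seq v -> bounded_seq (fun i => u i - v i).
Proof.
  intros [M HM] [N HN]; exists (M + N); intros i. unfold Rminus.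
  eapply Rle_trans; [apply Rabs_triang|]. rewrite Rabs_Ropp.
  specialize (HM i); specialize (HN i); lra.
Qed.

Lemma ex_series_wsum u : bounded_seq u -> ex_series (fun i => (/ 2) ^ (S i) * u i).
Proof.
  intros [M HM]. apply ex_series_Rabs.
  apply (ex_series_le (V := R_CompleteNormedModule) _ (fun i => M / 2 * (/ 2) ^ i)).
  - intros i. change (Rabs (Rabs ((/ 2) ^ S i * u i)) <= M / 2 * (/ 2) ^ i).
    rewrite Rabs_Rabsolu, Rabs_mult, (Rabs_pos_eq ((/ 2) ^ S i)) by (left; apply half_pow_pos).
    replace (M / 2 * (/ 2) ^ i) with ((/ 2) ^ S i * M) by (simpl; unfold Rdiv; ring).
    apply Rmult_le_compat_l; [left; apply half_pow_pos | apply HM].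
  - apply (ex_series_scal_l (V := R_NormedModule)), ex_series_geom.
    rewrite Rabs_pos_eq; lra.
Qed.

Lemma wsum_ext u v : (forall i, u i = v i) -> wsum u = wsum v.
Proof. intros H; unfold wsum; apply Series_ext; intros; rewrite H; ring. Qed.

Lemma wsum_plus u v :
  bounded_seq u -> bounded_seq v -> wsum (fun i => u i + v i) = wsum u + wsum v.
Proof.
  intros Hu Hv; unfold wsum. rewrite <- Series_plus by now apply ex_series_wsum.
  apply Series_ext; intros; ring.
Qed.

Lemma wsum_minus u v :
  bounded_seq u -> bounded_seq v -> wsum (fun i => u i - v i) = wsum u - wsum v.
Proof.
  intros Hu Hv; unfold wsum. rewrite <- Series_minus by now apply ex_series_wsum.
  apply Series_ext; intros; ring.
Qed.

Lemma wsum_const c : wsum (fun _ => c) = c.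
Proof.
  unfold wsum. rewrite (Series_ext _ (fun i => c / 2 * (/ 2) ^ i)) by (intros; simpl; field).
  rewrite Series_scal_l, Series_geom by (rewrite Rabs_pos_eq; lra). field.
Qed.

Lemma wsum_nonneg u : bounded_seq u -> (forall i, 0 <= u i) -> 0 <= wsum u.
Proof.
  intros Hb H. rewrite <- (wsum_const 0). unfold wsum.
  apply Series_le; [|now apply ex_series_wsum].
  intros i. rewrite Rmult_0_r. split; [lra|].
  apply Rmult_le_pos; [left; apply half_pow_pos | apply H].
Qed.

Lemma wsum_le u v :
  bounded_seq u -> bounded_seq v -> (forall i, u i <= v i) -> wsum u <= wsum v.
Proof.
  intros Hu Hv H.
  assert (0 <= wsum (fun i => v i - u i)).
  { apply wsum_nonneg; [now apply bounded_seq_minus|]. intros i; specialize (H i); lra. }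
  rewrite wsum_minus in H0 by assumption. lra.
Qed.

Lemma wsum_unit u : (forall i, 0 <= u i <= 1) -> 0 <= wsum u <= 1.
Proof.
  intros H. assert (Hb := bounded_seq_unit u H). split.
  - apply wsum_nonneg; [assumption | apply H].
  - rewrite <- (wsum_const 1). apply wsum_le; [assumption | apply bounded_seq_const | apply H].
Qed.

Lemma wsum_shift u :
  bounded_seq u -> wsum u = / 2 * u 0%nat + / 2 * wsum (fun i => u (S i)).
Proof.
  intros Hb. unfold wsum at 1. rewrite Series_incr_1 by now apply ex_series_wsum.
  unfold wsum. rewrite <- Series_scal_l. simpl. f_equal; [ring|].
  apply Series_ext; intros; simpl; ring.
Qed.

Lemma wsum_term_le u :
  bounded_seq u -> (forall i, 0 <= u i) -> forall i, (/ 2) ^ (S i) * u i <= wsum u.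
Proof.
  intros Hb Hpos i. revert u Hb Hpos. induction i as [|i IH]; intros u Hb Hpos;
    assert (Hb' : bounded_seq (fun k => u (S k))) by (destruct Hb as [M HM]; exists M; auto);
    rewrite (wsum_shift u Hb).
  - assert (0 <= wsum (fun k => u (S k))) by (apply wsum_nonneg; auto). simpl; lra.
  - specialize (IH _ Hb' (fun k => Hpos (S k))). specialize (Hpos 0%nat).
    change ((/ 2) ^ S (S i)) with (/ 2 * (/ 2) ^ S i). lra.
Qed.

Definition indic_ge (N i : nat) : R := if Nat.leb N i then 1 else 0.

Lemma indic_ge_unit N i : 0 <= indic_ge N i <= 1.
Proof. unfold indic_ge; destruct (Nat.leb N i); lra. Qed.

Lemma wsum_indic_ge N : wsum (indic_ge N) = (/ 2) ^ N.
Proof.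
  induction N as [|N IH].
  - transitivity (wsum (fun _ => 1)); [apply wsum_ext; reflexivity | apply wsum_const].
  - rewrite wsum_shift by (apply bounded_seq_unit, indic_ge_unit).
    rewrite (wsum_ext _ (indic_ge N)), IH by reflexivity.
    change (indic_ge (S N) 0) with 0. simpl; ring.
Qed.

Lemma wsum_approx u v N eta :
  (forall i, 0 <= u i <= 1) -> (forall i, 0 <= v i <= 1) -> 0 <= eta ->
  (forall i, (i < N)%nat -> u i <= v i + eta) -> wsum u <= wsum v + eta + (/ 2) ^ N.
Proof.
  intros Hu Hv Heta H.
  assert (Hbi : bounded_seq (indic_ge N)) by (apply bounded_seq_unit, indic_ge_unit).
  assert (Hbv : bounded_seq (fun i => v i + eta))
    by (apply bounded_seq_plus; [apply bounded_seq_unit, Hv | apply bounded_seq_const]).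
  apply Rle_trans with (wsum (fun i => (v i + eta) + indic_ge N i)).
  - apply wsum_le; [apply bounded_seq_unit, Hu | now apply bounded_seq_plus |].
    intros i. unfold indic_ge. destruct (Nat.leb N i) eqn:E.
    + specialize (Hu i); specialize (Hv i); lra.
    + apply Nat.leb_gt in E. specialize (H i E); lra.
  - rewrite wsum_plus, wsum_plus, wsum_const, wsum_indic_ge
      by (assumption || apply bounded_seq_unit, Hv || apply bounded_seq_const).
    lra.
Qed.

Lemma wsum_term_diff u v :
  bounded_seq u -> bounded_seq v -> (forall i, u i <= v i) ->
  forall i, (/ 2) ^ (S i) * (v i - u i) <= wsum v - wsum u.
Proof.
  intros Hu Hv H i. rewrite <- wsum_minus by assumption.
  apply (wsum_term_le (fun j => v j - u j)); [now apply bounded_seq_minus|].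
  intros j; specialize (H j); lra.
Qed.

Lemma wsum_eq_termwise u v :
  bounded_seq u -> bounded_seq v -> (forall i, u i <= v i) -> wsum u = wsum v ->
  forall i, u i = v i.
Proof.
  intros Hu Hv H E i. assert (Hd := wsum_term_diff u v Hu Hv H i).
  rewrite E, Rminus_diag in Hd. assert (Hp := half_pow_pos (S i)). specialize (H i).
  destruct (Rle_lt_or_eq_dec _ _ H) as [Hlt|]; [|assumption].
  assert (0 < (/ 2) ^ S i * (v i - u i)) by (apply Rmult_lt_0_compat; lra). lra.
Qed.

Lemma wsum_lt_component u v i delta :
  bounded_seq u -> bounded_seq v -> (forall j, u j <= v j) ->
  wsum v < wsum u + (/ 2) ^ (S i) * delta -> v i < u i + delta.
Proof.
  intros Hu Hv H Hlt. assert (Hd := wsum_term_diff u v Hu Hv H i).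
  apply (Rmult_lt_reg_l ((/ 2) ^ S i)); [apply half_pow_pos | lra].
Qed.

Lemma wsum_partial_metric (X : Poset) (q : nat -> X -> X -> R) :
  (forall i x y, 0 <= q i x y <= 1) ->
  (forall i x y, q i x x <= q i x y) ->
  (forall i x y, q i x y = q i y x) ->
  (forall i x y z, q i x y <= q i x z + q i z y - q i z z) ->
  (forall x y, (forall i, q i x x = q i x y /\ q i x y = q i y y) -> x = y) ->
  is_partial_metric X (fun x y => wsum (fun i => q i x y)).
Proof.
  intros Hunit Hself Hsym Htri Hsep.
  assert (Hb : forall x y, bounded_seq (fun i => q i x y))
    by (intros; apply bounded_seq_unit; auto).
  split; [|split; [|split; [|split]]].
  - intros x y; apply wsum_unit; auto.
  - intros x y; apply wsum_le; auto.
  - intros x y E1 E2. apply Hsep. intros i. split.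
    + apply (wsum_eq_termwise (fun i => q i x x) (fun i => q i x y)); auto.
    + symmetry. apply (wsum_eq_termwise (fun i => q i y y) (fun i => q i x y)); auto.
      intros j; rewrite (Hsym j x y); auto.
  - intros x y; apply wsum_ext; auto.
  - intros x y z.
    rewrite <- (wsum_plus (fun i => q i x z)), <- wsum_minus by auto using bounded_seq_plus.
    apply wsum_le; auto using bounded_seq_plus, bounded_seq_minus.
Qed.

Lemma wsum_directed_approx (X : Poset) (S : X -> Prop) (u : X -> nat -> R) (t : nat -> R) :
  directed X S -> (forall x i, 0 <= u x i <= 1) -> (forall i, 0 <= t i <= 1) ->
  (forall x y i, ord x y -> u y i <= u x i) ->
  (forall i eps, 0 < eps -> exists x, S x /\ u x i < t i + eps) ->
  forall eps, 0 < eps -> exists x, S x /\ wsum (u x) < wsum t + eps.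
Proof.
  intros [[x0 Hx0] Hdir] Hu Ht Hanti Happrox eps Heps.
  destruct (half_pow_small (eps / 2)) as [N HN]; [lra|].
  assert (Hfin : forall M, exists x, S x /\ forall i, (i < M)%nat -> u x i <= t i + eps / 2).
  { intros M. induction M as [|M [x1 [Hx1 H1]]].
    - exists x0; split; [assumption | intros; lia].
    - destruct (Happrox M (eps / 2)) as [x2 [Hx2 H2]]; [lra|].
      destruct (Hdir x1 x2 Hx1 Hx2) as [x3 [Hx3 [L1 L2]]].
      exists x3; split; [assumption|]. intros i Hi.
      destruct (Nat.eq_dec i M) as [->|Hne].
      + specialize (Hanti _ _ M L2). lra.
      + specialize (Hanti _ _ i L1). specialize (H1 i ltac:(lia)). lra. }
  destruct (Hfin N) as [x [Hx H]]. exists x; split; [assumption|].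
  assert (wsum (u x) <= wsum t + eps / 2 + (/ 2) ^ N) by (apply wsum_approx; auto; lra).
  lra.
Qed.

(** * Directed-complete posets and Scott continuity *)

Definition img {P Q : Poset} (f : P -> Q) (S : P -> Prop) : Q -> Prop :=
  fun y => exists x, S x /\ y = f x.

Definition scott_cont (P Q : Poset) (f : P -> Q) : Prop :=
  forall S s, directed P S -> is_sup P S s -> is_sup Q (img f S) (f s).

Definition has_dsups (P : Poset) : Prop :=
  forall S, directed P S -> exists s, is_sup P S s.

Definition bounded_joins (P : Poset) : Prop :=
  forall x y u : P, ord x u -> ord y u -> exists s, is_sup P (fun z => z = x \/ z = y) s.

Section PartialOrder.
Variable P : Poset.
Hypothesis PO : is_partial_order P.

Lemma ord_refl (x : P) : ord x x.
Proof. apply PO. Qed.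

Lemma ord_antisym (x y : P) : ord x y -> ord y x -> x = y.
Proof. apply PO. Qed.

Lemma ord_trans (x y z : P) : ord x y -> ord y z -> ord x z.
Proof. apply PO. Qed.

Lemma is_sup_ext (S S' : P -> Prop) s :
  (forall x, S x <-> S' x) -> is_sup P S s -> is_sup P S' s.
Proof.
  intros H [Hu Hl]; split.
  - intros x Hx; apply Hu, H, Hx.
  - intros u Hu'; apply Hl; intros x Hx; apply Hu', H, Hx.
Qed.

Lemma is_sup_unique S s t : is_sup P S s -> is_sup P S t -> s = t.
Proof. intros [Hs1 Hs2] [Ht1 Ht2]. apply ord_antisym; auto. Qed.

Lemma directed_pair (x y : P) : ord x y -> directed P (fun z => z = x \/ z = y).
Proof.
  intros Hxy; split; [exists x; auto|].
  intros a b Ha Hb; exists y; split; [auto|].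
  destruct Ha as [->| ->], Hb as [->| ->]; split; auto using ord_refl.
Qed.

Lemma is_sup_pair (x y : P) : ord x y -> is_sup P (fun z => z = x \/ z = y) y.
Proof.
  intros Hxy; split.
  - intros z [->| ->]; auto using ord_refl.
  - intros u Hu; apply Hu; auto.
Qed.

Lemma way_below_ord (b x : P) : way_below P b x -> ord b x.
Proof.
  intros H.
  assert (Hd : directed P (fun z => z = x)).
  { split; [exists x; auto|]. intros ? ? -> ->; exists x; auto using ord_refl. }
  assert (Hs : is_sup P (fun z => z = x) x).
  { split; [intros z ->; apply ord_refl | intros u Hu; apply Hu; auto]. }
  destruct (H _ x Hd Hs (ord_refl x)) as [d [-> Hd']]. exact Hd'.
Qed.

Lemma way_below_weaken_l (b' b x : P) : ord b' b -> way_below P b x -> way_below P b' x.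
Proof.
  intros H1 H2 S s HS Hs Hx. destruct (H2 S s HS Hs Hx) as [d [Hd Hbd]].
  exists d; split; [assumption | eapply ord_trans; eauto].
Qed.

Lemma way_below_weaken_r (b x x' : P) : way_below P b x -> ord x x' -> way_below P b x'.
Proof. intros H1 H2 S s HS Hs Hx. apply (H1 S s HS Hs). eapply ord_trans; eauto. Qed.

Lemma way_below_sup (b : P) S s :
  way_below P b s -> directed P S -> is_sup P S s -> exists d, S d /\ ord b d.
Proof. intros H HS Hs. apply (H S s HS Hs (ord_refl s)). Qed.

Lemma way_below_interpolate (B : P -> Prop) : is_basis P B ->
  forall b x, way_below P b x -> exists c, B c /\ way_below P b c /\ way_below P c x.
Proof.
  intros HB b x Hbx.
  set (T := fun d => B d /\ exists c, B c /\ way_below P d c /\ way_below P c x).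
  assert (HT : directed P T).
  { split.
    - destruct (HB x) as [[[c [Bc Hc]] _] _].
      destruct (HB c) as [[[d [Bd Hd]] _] _].
      exists d; split; [|exists c]; auto.
    - intros d1 d2 [Bd1 [c1 [Bc1 [H1 H1']]]] [Bd2 [c2 [Bc2 [H2 H2']]]].
      destruct (proj2 (proj1 (HB x)) c1 c2 (conj Bc1 H1') (conj Bc2 H2'))
        as [c3 [[Bc3 H3] [L1 L2]]].
      destruct (HB c3) as [Hdc3 Hsc3].
      destruct (way_below_sup d1 _ _ (way_below_weaken_r _ _ _ H1 L1) Hdc3 Hsc3)
        as [e1 [[Be1 He1] Le1]].
      destruct (way_below_sup d2 _ _ (way_below_weaken_r _ _ _ H2 L2) Hdc3 Hsc3)
        as [e2 [[Be2 He2] Le2]].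
      destruct (proj2 Hdc3 e1 e2 (conj Be1 He1) (conj Be2 He2)) as [e3 [[Be3 He3] [M1 M2]]].
      exists e3; split.
      + split; [|exists c3]; auto.
      + split; eapply ord_trans; eauto. }
  assert (HsT : is_sup P T x).
  { split.
    - intros d [_ [c [_ [H1 H2]]]]. eapply ord_trans; apply way_below_ord; eauto.
    - intros u Hu. apply (proj2 (proj2 (HB x))).
      intros c [Bc Hc]. apply (proj2 (proj2 (HB c))).
      intros d [Bd Hd]. apply Hu. split; [|exists c]; auto. }
  destruct (way_below_sup b T x Hbx HT HsT) as [d [[Bd [c [Bc [H1 H2]]]] Hbd]].
  exists c; split; [|split]; [assumption | eapply way_below_weaken_l; eauto | assumption].
Qed.

End PartialOrder.

Lemma bounded_joins_of_bounded_complete (D : Poset) : bounded_complete D -> bounded_joins D.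
Proof.
  intros BC x y u Hx Hy.
  destruct (BC (cons x (cons y nil))) as [s Hs].
  - exists u. intros z [<-|[<-|[]]]; assumption.
  - exists s.
    apply (is_sup_ext D) with (S := fun z => List.In z (cons x (cons y nil))); [|exact Hs].
    intros z; simpl; split; [intros [H|[H|[]]]; subst; auto | intros [H|H]; subst; auto].
Qed.

Section ScottContinuity.
Variables P Q : Poset.
Hypothesis PO : is_partial_order P.

Lemma scott_cont_monotone (f : P -> Q) : scott_cont P Q f -> forall x y, ord x y -> ord (f x) (f y).
Proof.
  intros Hf x y Hxy.
  apply (Hf _ _ (directed_pair P PO x y Hxy) (is_sup_pair P PO x y Hxy)). exists x; auto.
Qed.

Lemma directed_img (f : P -> Q) S : scott_cont P Q f -> directed P S -> directed Q (img f S).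
Proof.
  intros Hf [[x Hx] Hd]. split.
  - exists (f x), x; auto.
  - intros a b [x1 [H1 ->]] [x2 [H2 ->]].
    destruct (Hd x1 x2 H1 H2) as [z [Hz [L1 L2]]].
    exists (f z); split; [exists z; auto | split; apply scott_cont_monotone; auto].
Qed.

Lemma scott_cont_comp (T : Poset) (f : P -> Q) (g : Q -> T) :
  scott_cont P Q f -> scott_cont Q T g -> scott_cont P T (fun x => g (f x)).
Proof.
  intros Hf Hg S s HS Hs.
  apply (is_sup_ext T) with (S := img g (img f S)); [|apply Hg; auto using directed_img].
  intros y; split.
  - intros [z [[x [Hx ->]] ->]]. exists x; auto.
  - intros [x [Hx ->]]. exists (f x); split; [exists x|]; auto.
Qed.

Lemma scott_cont_const (c : Q) : is_partial_order Q -> scott_cont P Q (fun _ => c).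
Proof.
  intros QO S s [[x Hx] _] _. split.
  - intros y [z [_ ->]]. apply ord_refl; assumption.
  - intros u Hu. apply Hu. exists x; auto.
Qed.

End ScottContinuity.

(** * Function spaces *)

Section FunctionSpace.
Variable P : Poset.
Hypothesis PO : is_partial_order P.

Lemma funp_ext (f g : FunP P) : (forall x, app f x = app g x) -> f = g.
Proof.
  destruct f as [f Hf], g as [g Hg]. unfold app; simpl. intros H.
  assert (f = g) by (apply functional_extensionality; auto). subst g.
  f_equal. apply proof_irrelevance.
Qed.

Lemma funp_ord_intro (f g : FunP P) : (forall x, ord (app f x) (app g x)) -> ord f g.
Proof. intros H; exact H. Qed.

Lemma funp_ord_app (f g : FunP P) x : ord f g -> ord (app f x) (app g x).
Proof. intros H; apply H. Qed.

Lemma funp_partial_order : is_partial_order (FunP P).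
Proof.
  split; [|split].
  - intros f x. apply ord_refl; assumption.
  - intros f g H1 H2. apply funp_ext. intros x. apply (ord_antisym P PO); [apply H1 | apply H2].
  - intros f g h H1 H2 x. apply (ord_trans P PO _ (app g x)); [apply H1 | apply H2].
Qed.

Lemma app_mkfun (f : P -> P) : scott_continuous P f -> forall x, app (mkfun P f) x = f x.
Proof.
  intros Hf x. unfold mkfun.
  destruct (excluded_middle_informative (scott_continuous P f)); [reflexivity | contradiction].
Qed.

Lemma mkfun_ext (f g : P -> P) : (forall x, f x = g x) -> mkfun P f = mkfun P g.
Proof. intros H. replace g with f by (apply functional_extensionality; auto). reflexivity. Qed.

Lemma mkfun_app (f : FunP P) : mkfun P (app f) = f.
Proof. apply funp_ext. intros x. apply app_mkfun. exact (proj2_sig f). Qed.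

Lemma app_scott_cont (f : FunP P) : scott_cont P P (app f).
Proof. exact (proj2_sig f). Qed.

Lemma app_monotone (f : FunP P) x y : ord x y -> ord (app f x) (app f y).
Proof. apply scott_cont_monotone; [assumption | apply app_scott_cont]. Qed.

Lemma mkfun_const_least (bt : P) :
  (forall x, ord bt x) -> forall f : FunP P, ord (mkfun P (fun _ => bt)) f.
Proof.
  intros H f. apply funp_ord_intro; intros x.
  rewrite app_mkfun by (apply scott_cont_const; assumption). apply H.
Qed.

Definition evals (F : FunP P -> Prop) (x : P) : P -> Prop :=
  fun y => exists f, F f /\ y = app f x.

Lemma directed_evals F x : directed (FunP P) F -> directed P (evals F x).
Proof.
  intros [[f Hf] Hd]. split.
  - exists (app f x), f; auto.
  - intros a b [f1 [H1 ->]] [f2 [H2 ->]]. destruct (Hd f1 f2 H1 H2) as [h [Hh [L1 L2]]].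
    exists (app h x); split; [exists h; auto | split; [apply L1 | apply L2]].
Qed.

Hypothesis DC : has_dsups P.

Lemma funp_sup_pointwise_exists F : directed (FunP P) F ->
  exists s, is_sup (FunP P) F s /\ forall x, is_sup P (evals F x) (app s x).
Proof.
  intros HF.
  destruct (choice (fun x s => is_sup P (evals F x) s)) as [sf Hsf].
  { intros x. apply DC, directed_evals, HF. }
  assert (Fle : forall f, F f -> forall x, ord (app f x) (sf x)).
  { intros f Hf x. apply (Hsf x). exists f; auto. }
  assert (Hc : scott_continuous P sf).
  { intros S s HS Hs. split.
    - intros y [x [Hx ->]]. apply (Hsf x). intros z [f [Hf ->]].
      apply (ord_trans P PO _ (app f s)); [apply app_monotone, Hs, Hx | apply Fle; auto].
    - intros u Hu. apply (Hsf s). intros z [f [Hf ->]].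
      apply (app_scott_cont f S s HS Hs). intros y [x [Hx ->]].
      apply (ord_trans P PO _ (sf x)); [apply Fle; auto | apply Hu; exists x; auto]. }
  exists (mkfun P sf). split; [split|].
  - intros f Hf. apply funp_ord_intro; intros x.
    rewrite app_mkfun by assumption. apply Fle; assumption.
  - intros u Hu. apply funp_ord_intro; intros x. rewrite app_mkfun by assumption.
    apply (Hsf x). intros z [f [Hf ->]]. apply Hu; assumption.
  - intros x. rewrite app_mkfun by assumption. apply Hsf.
Qed.

Lemma funp_has_dsups : has_dsups (FunP P).
Proof. intros F HF. destruct (funp_sup_pointwise_exists F HF) as [s [Hs _]]; eauto. Qed.

Lemma funp_sup_pointwise F s : directed (FunP P) F -> is_sup (FunP P) F s ->
  forall x, is_sup P (evals F x) (app s x).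
Proof.
  intros HF Hs x. destruct (funp_sup_pointwise_exists F HF) as [t [Ht Htx]].
  rewrite (is_sup_unique _ funp_partial_order F s t Hs Ht). apply Htx.
Qed.

Lemma eval_scott_cont (c : P) : scott_cont (FunP P) P (fun f => app f c).
Proof. intros F s HF Hs. apply (funp_sup_pointwise F s HF Hs c). Qed.

Hypothesis JN : bounded_joins P.

Lemma funp_bounded_joins : bounded_joins (FunP P).
Proof.
  intros f g u Hf Hg.
  destruct (choice (fun x s => is_sup P (fun z => z = app f x \/ z = app g x) s)) as [jf Hj].
  { intros x. apply (JN _ _ (app u x) (Hf x) (Hg x)). }
  assert (Jf : forall x, ord (app f x) (jf x)) by (intros x; apply (Hj x); auto).
  assert (Jg : forall x, ord (app g x) (jf x)) by (intros x; apply (Hj x); auto).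
  assert (Jl : forall x v, ord (app f x) v -> ord (app g x) v -> ord (jf x) v).
  { intros x v H1 H2. apply (Hj x). intros z [->| ->]; assumption. }
  assert (Hbelow : forall (h : FunP P) S s, directed P S -> is_sup P S s ->
            (forall x, ord (app h x) (jf x)) ->
            forall v, upper_bound P (img jf S) v -> ord (app h s) v).
  { intros h S s HS Hs Hh v Hv. apply (app_scott_cont h S s HS Hs). intros y [x [Hx ->]].
    apply (ord_trans P PO _ (jf x)); [apply Hh | apply Hv; exists x; auto]. }
  assert (Hc : scott_continuous P jf).
  { intros S s HS Hs. split.
    - intros y [x [Hx ->]]. assert (Hxs : ord x s) by (apply Hs, Hx).
      apply Jl; [apply (ord_trans P PO _ (app f s)) | apply (ord_trans P PO _ (app g s))];
        auto using app_monotone.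
    - intros v Hv. apply Jl; [apply (Hbelow f S) | apply (Hbelow g S)]; assumption. }
  exists (mkfun P jf). split.
  - intros z [->| ->]; apply funp_ord_intro; intros x; rewrite app_mkfun by assumption; auto.
  - intros v Hv. apply funp_ord_intro; intros x. rewrite app_mkfun by assumption.
    apply Jl; apply Hv; auto.
Qed.

End FunctionSpace.

Lemma scott_cont_ext (P Q : Poset) (f g : P -> Q) :
  (forall x, f x = g x) -> scott_cont P Q f -> scott_cont P Q g.
Proof. intros H. replace g with f by (apply functional_extensionality; auto). auto. Qed.

Section FunctionSpaceMaps.
Variables P Q : Poset.
Hypothesis PO : is_partial_order P.
Hypothesis QO : is_partial_order Q.

Lemma conj_scott_cont_inner (e : P -> Q) (e' : Q -> P) (f : FunP P) :
  scott_cont P Q e -> scott_cont Q P e' -> scott_continuous Q (fun y => e (app f (e' y))).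
Proof.
  intros He He'.
  apply (scott_cont_comp Q P QO Q (fun y => app f (e' y)) e); [|assumption].
  apply (scott_cont_comp Q P QO P e' (app f)); [assumption | apply app_scott_cont].
Qed.

Lemma conj_scott_cont (e : P -> Q) (e' : Q -> P) :
  has_dsups P -> scott_cont P Q e -> scott_cont Q P e' ->
  scott_cont (FunP P) (FunP Q) (fun f => mkfun Q (fun y => e (app f (e' y)))).
Proof.
  intros DC He He' F s HF Hs.
  assert (Hin := fun f => conj_scott_cont_inner e e' f He He').
  split.
  - intros h [f [Hf ->]]. apply funp_ord_intro; intros y. rewrite !app_mkfun by auto.
    apply (scott_cont_monotone P Q PO e He). apply Hs; assumption.
  - intros u Hu. apply funp_ord_intro; intros y. rewrite app_mkfun by auto.
    apply (He _ _ (directed_evals P F (e' y) HF) (funp_sup_pointwise P PO DC F s HF Hs (e' y))).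
    intros z [x [[f [Hf ->]] ->]].
    assert (Hu' := funp_ord_app Q _ _ y (Hu _ (ex_intro _ f (conj Hf eq_refl)))).
    rewrite app_mkfun in Hu' by auto. exact Hu'.
Qed.

Lemma const_fun_scott_cont (g : P -> Q) :
  scott_cont P Q g -> scott_cont P (FunP Q) (fun x => mkfun Q (fun _ => g x)).
Proof.
  intros Hg S s HS Hs.
  assert (Hc : forall x, scott_continuous Q (fun _ => g x))
    by (intros; apply scott_cont_const; auto).
  split.
  - intros h [x [Hx ->]]. apply funp_ord_intro; intros y. rewrite !app_mkfun by auto.
    apply (scott_cont_monotone P Q PO g Hg). apply Hs, Hx.
  - intros u Hu. apply funp_ord_intro; intros y. rewrite app_mkfun by auto.
    apply (Hg S s HS Hs). intros z [x [Hx ->]].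
    assert (Hu' := funp_ord_app Q _ _ y (Hu _ (ex_intro _ x (conj Hx eq_refl)))).
    rewrite app_mkfun in Hu' by auto. exact Hu'.
Qed.

End FunctionSpaceMaps.

Lemma way_below_scott_open (P : Poset) (B : P -> Prop) :
  is_partial_order P -> is_basis P B -> forall b, scott_open P (way_below P b).
Proof.
  intros PO HB b. split.
  - intros u v Hu Huv. eapply way_below_weaken_r; eauto.
  - intros S s HS Hs Hb.
    destruct (way_below_interpolate P PO B HB b s Hb) as [c [_ [Hbc Hcs]]].
    destruct (way_below_sup P PO c S s Hcs HS Hs) as [d [Hd Hcd]].
    exists d; split; [assumption | eapply way_below_weaken_r; eauto].
Qed.

(** * Partial metrics adapted to the Scott topology *)

Lemma pball_p_open (P : Poset) (q : P -> P -> R) :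
  is_partial_metric P q -> forall c r, p_open P q (pball P q c r).
Proof.
  intros [_ [_ [_ [_ Htri]]]] c r x Hx. unfold pball in Hx.
  exists x, (q c c + r - q x c). split; [lra|]. split; unfold pball; [lra|].
  intros z Hz. specialize (Htri z c x). lra.
Qed.

Record scott_adapted (P : Poset) (q : P -> P -> R) : Prop := {
  sa_unit : forall x y, 0 <= q x y <= 1;
  sa_pmetric : is_partial_metric P q;
  sa_antitone : forall x y z, ord x y -> q y z <= q x z;
  sa_sup_approx : forall S s z eps, directed P S -> is_sup P S s -> 0 < eps ->
                   exists d, S d /\ q d z < q s z + eps;
  sa_way_below : forall b x, way_below P b x ->
                  exists delta, 0 < delta /\ forall z, q z x < q x x + delta -> ord b z
}.

Lemma scott_adapted_of_quantifies (P : Poset) (q : P -> P -> R) (B : P -> Prop) :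
  is_partial_order P -> is_basis P B -> quantifies P q -> (forall x y, 0 <= q x y <= 1) ->
  scott_adapted P q.
Proof.
  intros PO HB [Hpm Hq] Hunit.
  assert (Hball : forall c r, scott_open P (pball P q c r))
    by (intros c r; apply Hq, pball_p_open, Hpm).
  destruct Hpm as [Hnn [Hself [Hsep [Hsym Htri]]]].
  constructor.
  - exact Hunit.
  - repeat split; assumption.
  - intros x y z Hxy. destruct (Rle_dec (q y z) (q x z)) as [|Hlt]; [assumption|].
    exfalso. set (r := (q x z + q y z) / 2 - q z z).
    assert (Hx : pball P q z r x) by (unfold pball, r; lra).
    assert (Hy := proj1 (Hball z r) x y Hx Hxy). unfold pball, r in Hy. lra.
  - intros S s z eps HS Hs Heps.
    destruct (proj2 (Hball z (q s z - q z z + eps)) S s HS Hs) as [d [Hd Hdz]];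
      unfold pball in *; [lra|].
    exists d; split; [assumption | lra].
  - intros b x Hbx.
    destruct (proj1 (Hq _) (way_below_scott_open P B PO HB b) x Hbx) as [y [eps [Heps [Hx Hsub]]]].
    unfold pball in Hx. exists (q y y + eps - q x y). split; [lra|].
    intros z Hz. apply (way_below_ord P PO), Hsub. unfold pball. specialize (Htri z y x). lra.
Qed.

Lemma scott_open_of_p_open (P : Poset) (q : P -> P -> R) :
  (forall x y z, ord x y -> q y z <= q x z) ->
  (forall S s z eps, directed P S -> is_sup P S s -> 0 < eps ->
                     exists d, S d /\ q d z < q s z + eps) ->
  forall U, p_open P q U -> scott_open P U.
Proof.
  intros Hanti Happrox U HU. split.
  - intros x y Hx Hxy. destruct (HU x Hx) as [c [r [Hr [Hc Hsub]]]].
    apply Hsub. unfold pball in *. specialize (Hanti x y c Hxy). lra.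
  - intros S s HS Hs Hs'. destruct (HU s Hs') as [c [r [Hr [Hc Hsub]]]]. unfold pball in Hc.
    destruct (Happrox S s c (q c c + r - q s c) HS Hs) as [d [Hd Hdc]]; [lra|].
    exists d; split; [assumption | apply Hsub; unfold pball; lra].
Qed.

Section FunctionSpaceMetric.
Variable P : Poset.
Variable q : P -> P -> R.
Variable en : nat -> P.
Variable bt : P.
Hypothesis PO : is_partial_order P.
Hypothesis DC : has_dsups P.
Hypothesis JN : bounded_joins P.
Hypothesis BT : forall x : P, ord bt x.
Hypothesis BAS : is_basis P (fun b => exists i, en i = b).
Hypothesis SA : scott_adapted P q.

Definition funp_pm (f g : FunP P) : R := wsum (fun i => q (app f (en i)) (app g (en i))).

Lemma funp_ext_basis (f g : FunP P) : (forall i, app f (en i) = app g (en i)) -> f = g.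
Proof.
  intros H. apply funp_ext. intros x. destruct (BAS x) as [Hd Hs].
  apply (is_sup_unique P PO _ _ _ (app_scott_cont P f _ _ Hd Hs)).
  apply (is_sup_ext P) with (S := img (app g) (fun b => (exists i, en i = b) /\ way_below P b x));
    [|exact (app_scott_cont P g _ _ Hd Hs)].
  intros y; split; intros [b [[[i <-] Hb] ->]];
    exists (en i); (split; [split; eauto|]); rewrite H; auto.
Qed.

Lemma funp_pm_partial_metric : is_partial_metric (FunP P) funp_pm.
Proof.
  destruct (sa_pmetric _ _ SA) as [_ [Hself [Hsep [Hsym Htri]]]].
  assert (Hunit := sa_unit _ _ SA).
  apply (wsum_partial_metric (FunP P) (fun i f g => q (app f (en i)) (app g (en i)))); auto.
  intros f g H. apply funp_ext_basis. intros i. apply Hsep; apply H.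
Qed.

Definition step_fun (i : nat) (c : P) : P -> P :=
  fun y => if excluded_middle_informative (way_below P (en i) y) then c else bt.

Lemma step_fun_scott_cont i c : scott_continuous P (step_fun i c).
Proof.
  intros S s HS Hs. unfold step_fun at 2.
  destruct (excluded_middle_informative (way_below P (en i) s)) as [Hw|Hw]; split.
  - intros y [x [Hx ->]]. unfold step_fun.
    destruct (excluded_middle_informative _); auto using ord_refl.
  - intros u Hu.
    destruct (way_below_interpolate P PO _ BAS _ _ Hw) as [c' [_ [H1 H2]]].
    destruct (way_below_sup P PO c' S s H2 HS Hs) as [d [Hd Hc'd]].
    assert (Hid : way_below P (en i) d) by (eapply way_below_weaken_r; eauto).
    specialize (Hu (step_fun i c d) (ex_intro _ d (conj Hd eq_refl))).
    unfold step_fun in Hu. destruct (excluded_middle_informative _); [assumption | contradiction].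
  - intros y [x [Hx ->]]. unfold step_fun.
    destruct (excluded_middle_informative _) as [Hw'|]; auto using ord_refl.
    exfalso. apply Hw. eapply way_below_weaken_r; eauto. apply Hs; assumption.
  - intros u _. apply BT.
Qed.

Definition step (i : nat) (c : P) : FunP P := mkfun P (step_fun i c).

Lemma app_step i c y : app (step i c) y = step_fun i c y.
Proof. apply app_mkfun, step_fun_scott_cont. Qed.

Lemma step_ord i c (g : FunP P) : ord c (app g (en i)) -> ord (step i c) g.
Proof.
  intros H. apply funp_ord_intro. intros y. rewrite app_step. unfold step_fun.
  destruct (excluded_middle_informative _) as [Hw|]; [|apply BT].
  apply (ord_trans P PO _ _ _ H). apply app_monotone, way_below_ord; assumption.
Qed.

(* Encodes the finite joins of step functions below [f] by the constraints they impose. *)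
Definition step_approx (f h : FunP P) : Prop :=
  ord h f /\ exists l : list (nat * P),
    (forall ic, List.In ic l -> way_below P (snd ic) (app f (en (fst ic)))) /\
    (forall g : FunP P, (forall ic, List.In ic l -> ord (snd ic) (app g (en (fst ic)))) -> ord h g).

Lemma step_approx_directed f : directed (FunP P) (step_approx f).
Proof.
  split.
  - exists (mkfun P (fun _ => bt)). split; [apply mkfun_const_least; assumption|].
    exists nil. split; [intros ic []|]. intros g _. apply mkfun_const_least; assumption.
  - intros h1 h2 [L1 [l1 [A1 B1]]] [L2 [l2 [A2 B2]]].
    destruct (funp_bounded_joins P PO JN h1 h2 f L1 L2) as [s [Hu Hl]].
    exists s. split; [split|split; apply Hu; auto].
    + apply Hl. intros z [->| ->]; assumption.
    + exists (List.app l1 l2). split.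
      * intros ic Hic. apply List.in_app_or in Hic. destruct Hic; auto.
      * intros g Hg. apply Hl. intros z [->| ->]; [apply B1 | apply B2];
          intros; apply Hg, List.in_or_app; auto.
Qed.

Lemma step_approx_sup f : is_sup (FunP P) (step_approx f) f.
Proof.
  split; [intros h [H _]; exact H|].
  intros u Hu. apply funp_ord_intro. intros x.
  destruct (BAS x) as [Hd Hs].
  apply (app_scott_cont P f _ _ Hd Hs). intros y [b [[[i <-] Hb] ->]].
  apply (proj2 (proj2 (BAS (app f (en i))))). intros c [_ Hc].
  assert (Hst : step_approx f (step i c)).
  { split; [apply step_ord, way_below_ord; assumption|].
    exists (cons (i, c) nil). split.
    - intros ic [<-|[]]. assumption.
    - intros g Hg. apply step_ord, (Hg (i, c)). left; reflexivity. }
  assert (H := funp_ord_app P _ _ x (Hu _ Hst)).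
  rewrite app_step in H. unfold step_fun in H.
  destruct (excluded_middle_informative _); [assumption | contradiction].
Qed.

Lemma funp_pm_ball_above (f : FunP P) (l : list (nat * P)) :
  (forall ic, List.In ic l -> way_below P (snd ic) (app f (en (fst ic)))) ->
  exists delta, 0 < delta /\ forall g, funp_pm g f < funp_pm f f + delta ->
     forall ic, List.In ic l -> ord (snd ic) (app g (en (fst ic))).
Proof.
  destruct (sa_pmetric _ _ SA) as [_ [Hself [_ [Hsym _]]]].
  assert (Hb : forall f g, bounded_seq (fun i => q (app f (en i)) (app g (en i))))
    by (intros; apply bounded_seq_unit; intros; apply SA).
  induction l as [|[i c] l IH]; intros Hl.
  - exists 1; split; [lra|]. intros g _ ic [].
  - destruct IH as [d1 [Hd1 H1]]; [intros ic Hic; apply Hl; right; assumption|].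
    destruct (sa_way_below _ _ SA c (app f (en i))) as [d2 [Hd2 H2]];
      [apply (Hl (i, c)); left; reflexivity|].
    assert (Hp := half_pow_pos (S i)).
    assert (Hm1 := Rmin_l d1 ((/ 2) ^ S i * d2)).
    assert (Hm2 := Rmin_r d1 ((/ 2) ^ S i * d2)).
    exists (Rmin d1 ((/ 2) ^ S i * d2)).
    split; [apply Rmin_glb_lt; [|apply Rmult_lt_0_compat]; assumption|].
    intros g Hg ic [<-|Hin]; [|apply H1; [lra | assumption]].
    (* The new constraint is read off the [i]-th term of the weighted sum. *)
    apply H2, (wsum_lt_component (fun j => q (app f (en j)) (app f (en j)))
                                 (fun j => q (app g (en j)) (app f (en j)))); auto.
    + intros j. rewrite (Hsym (app g (en j))). apply Hself.
    + fold (funp_pm f f) (funp_pm g f). lra.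
Qed.

Lemma funp_pm_way_below b f : way_below (FunP P) b f ->
  exists delta, 0 < delta /\ forall g, funp_pm g f < funp_pm f f + delta -> ord b g.
Proof.
  intros Hb.
  destruct (way_below_sup _ (funp_partial_order P PO) b _ _ Hb
              (step_approx_directed f) (step_approx_sup f)) as [h [[_ [l [Hl Hh]]] Hbh]].
  destruct (funp_pm_ball_above f l Hl) as [delta [Hdelta H]]. exists delta; split; [assumption|].
  intros g Hg. apply (ord_trans _ (funp_partial_order P PO) _ h); auto.
Qed.

Lemma funp_pm_scott_adapted : scott_adapted (FunP P) funp_pm.
Proof.
  constructor.
  - intros f g. apply wsum_unit. intros; apply SA.
  - apply funp_pm_partial_metric.
  - intros f g h Hfg. apply wsum_le; try (apply bounded_seq_unit; intros; apply SA).
    intros i. apply SA, Hfg.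
  - intros F s h eps HF Hs Heps.
    assert (Hunit := sa_unit _ _ SA).
    apply (wsum_directed_approx (FunP P) F (fun f i => q (app f (en i)) (app h (en i)))); auto.
    + intros f g i Hfg. apply SA, Hfg.
    + intros i e He.
      destruct (sa_sup_approx _ _ SA _ _ (app h (en i)) e (directed_evals P F (en i) HF)
                  (funp_sup_pointwise P PO DC F s HF Hs (en i)) He) as [d [[f [Hf ->]] Hd]].
      exists f; split; assumption.
  - apply funp_pm_way_below.
Qed.

End FunctionSpaceMetric.

(** * The inverse limit *)

Section InverseLimit.
Variable D : Poset.
Variable bot : D.
Hypothesis PO0 : is_partial_order D.
Hypothesis DC0 : has_dsups D.
Hypothesis BOT0 : forall x : D, ord bot x.

Lemma Dn_partial_order n : is_partial_order (Dn D n).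
Proof. induction n; [assumption | apply funp_partial_order; assumption]. Qed.

Lemma Dn_has_dsups n : has_dsups (Dn D n).
Proof. induction n; [assumption | apply funp_has_dsups; auto using Dn_partial_order]. Qed.

Lemma Dn_bounded_joins : bounded_joins D -> forall n, bounded_joins (Dn D n).
Proof.
  intros JN n; induction n; [assumption | apply funp_bounded_joins; auto using Dn_partial_order].
Qed.

Fixpoint bot_n (n : nat) : Dn D n :=
  match n return Dn D n with
  | O => bot
  | S m => mkfun (Dn D m) (fun _ => bot_n m)
  end.

Lemma bot_n_least n (x : Dn D n) : ord (bot_n n) x.
Proof.
  revert x; induction n; [exact BOT0|].
  apply mkfun_const_least; [apply Dn_partial_order | assumption].
Qed.

(* [ep_pair n k] is the pair (e_{n,k}, e_{k,n}) of the canonical maps between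
   levels [n] and [k]; both are built at once so that the recursion is structural. *)
Fixpoint ep_pair0 (k : nat) : (D -> Dn D k) * (Dn D k -> D) :=
  match k return (D -> Dn D k) * (Dn D k -> D) with
  | O => (fun x => x, fun x => x)
  | S k' => (fun x => mkfun (Dn D k') (fun _ => fst (ep_pair0 k') x),
             fun v => snd (ep_pair0 k') (app v (fst (ep_pair0 k') bot)))
  end.

Fixpoint ep_pair (n : nat) : forall k, (Dn D n -> Dn D k) * (Dn D k -> Dn D n) :=
  match n return forall k, (Dn D n -> Dn D k) * (Dn D k -> Dn D n) with
  | O => ep_pair0
  | S n' => fun k =>
     match k return (Dn D (S n') -> Dn D k) * (Dn D k -> Dn D (S n')) with
     | O => (fun w => fst (ep_pair n' 0) (app w (snd (ep_pair n' 0) bot)),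
             fun x => mkfun (Dn D n') (fun _ => snd (ep_pair n' 0) x))
     | S k' =>
         (fun w => mkfun (Dn D k') (fun y => fst (ep_pair n' k') (app w (snd (ep_pair n' k') y))),
          fun v => mkfun (Dn D n') (fun y => snd (ep_pair n' k') (app v (fst (ep_pair n' k') y))))
     end
  end.

Definition ep n k : Dn D n -> Dn D k := fst (ep_pair n k).

Lemma ep_pair_swap n k :
  (forall x, snd (ep_pair n k) x = ep k n x) /\ (forall x, ep n k x = snd (ep_pair k n) x).
Proof.
  unfold ep. revert k; induction n as [|n IH]; intros k.
  - induction k as [|k [IH1 IH2]]; [split; reflexivity|]. split.
    + intros v. simpl. rewrite IH1, IH2. reflexivity.
    + intros x. simpl. apply mkfun_ext. intros _. rewrite IH2. reflexivity.
  - destruct k as [|k].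
    + destruct (IH 0%nat) as [IH1 IH2]. split.
      * intros x. simpl. apply mkfun_ext. intros _. rewrite IH1. reflexivity.
      * intros w. simpl. rewrite IH1, IH2. reflexivity.
    + destruct (IH k) as [IH1 IH2]. split.
      * intros v. simpl. apply mkfun_ext. intros y. rewrite IH1, IH2. reflexivity.
      * intros w. simpl. apply mkfun_ext. intros y. rewrite IH1, IH2. reflexivity.
Qed.

Lemma ep_0S k x : ep 0 (S k) x = mkfun (Dn D k) (fun _ => ep 0 k x).
Proof. reflexivity. Qed.

Lemma ep_S0 n w : ep (S n) 0 w = ep n 0 (app w (ep 0 n bot)).
Proof. unfold ep at 1; simpl. rewrite (proj1 (ep_pair_swap n 0)). reflexivity. Qed.

Lemma ep_SS n k w : ep (S n) (S k) w = mkfun (Dn D k) (fun y => ep n k (app w (ep k n y))).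
Proof.
  unfold ep at 1; simpl. apply mkfun_ext; intros y. rewrite (proj1 (ep_pair_swap n k)). reflexivity.
Qed.

Lemma ep_scott_cont_both n k :
  scott_cont (Dn D n) (Dn D k) (ep n k) /\ scott_cont (Dn D k) (Dn D n) (ep k n).
Proof.
  assert (HS0 : forall m, scott_cont (Dn D m) D (ep m 0) -> scott_cont (Dn D (S m)) D (ep (S m) 0)).
  { intros m H. apply (scott_cont_ext _ _ (fun w => ep m 0 (app w (ep 0 m bot))));
      [intros; symmetry; apply ep_S0|].
    apply (scott_cont_comp (Dn D (S m)) (Dn D m)); auto using Dn_partial_order.
    apply eval_scott_cont; auto using Dn_partial_order, Dn_has_dsups. }
  assert (H0S : forall l, scott_cont D (Dn D l) (ep 0 l) -> scott_cont D (Dn D (S l)) (ep 0 (S l))).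
  { intros l H. apply const_fun_scott_cont; auto using Dn_partial_order. }
  assert (HSS : forall m l, scott_cont (Dn D m) (Dn D l) (ep m l) ->
                  scott_cont (Dn D l) (Dn D m) (ep l m) ->
                  scott_cont (Dn D (S m)) (Dn D (S l)) (ep (S m) (S l))).
  { intros m l H1 H2.
    apply (scott_cont_ext _ _ (fun w => mkfun (Dn D l) (fun y => ep m l (app w (ep l m y)))));
      [intros; symmetry; apply ep_SS|].
    apply conj_scott_cont; auto using Dn_partial_order, Dn_has_dsups. }
  revert k; induction n as [|n IH].
  - induction k as [|k [IH1 IH2]]; [split; apply id_scott_continuous | split; auto].
  - intros [|k]; [destruct (IH 0%nat) | destruct (IH k)]; split; auto.
Qed.

Lemma ep_scott_cont n k : scott_cont (Dn D n) (Dn D k) (ep n k).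
Proof. apply ep_scott_cont_both. Qed.

Lemma ep_monotone n k x y : ord x y -> ord (ep n k x) (ep n k y).
Proof. apply scott_cont_monotone; [apply Dn_partial_order | apply ep_scott_cont]. Qed.

Lemma ep_SS_app n k w y : app (ep (S n) (S k) w) y = ep n k (app w (ep k n y)).
Proof.
  rewrite ep_SS. apply app_mkfun.
  apply conj_scott_cont_inner; auto using Dn_partial_order, ep_scott_cont.
Qed.

Lemma ep_0S_app k x y : app (ep 0 (S k) x) y = ep 0 k x.
Proof. rewrite ep_0S. apply app_mkfun, scott_cont_const, Dn_partial_order. Qed.

Lemma ep_id n w : ep n n w = w.
Proof.
  induction n as [|n IH]; [reflexivity|].
  rewrite ep_SS. transitivity (mkfun (Dn D n) (app w)); [|apply mkfun_app].
  apply mkfun_ext. intros y. rewrite !IH. reflexivity.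
Qed.

Lemma ep_comp_step n k :
  (forall w, ep (S k) k (ep n (S k) w) = ep n k w) /\
  (forall w, ep (S k) n (ep k (S k) w) = ep k n w).
Proof.
  revert k; induction n as [|n IH]; intros k.
  - induction k as [|k [IH1 IH2]].
    + split; intros w; rewrite (ep_S0 0), (ep_0S_app 0 w); reflexivity.
    + split.
      * intros x. rewrite (ep_SS (S k) k), (ep_0S k). apply mkfun_ext. intros y.
        rewrite (ep_0S_app (S k) x), IH1. reflexivity.
      * intros w. rewrite (ep_S0 (S k)), (ep_SS_app k (S k)), IH2, IH1, (ep_S0 k). reflexivity.
  - destruct k as [|k].
    + split.
      * intros w. rewrite (ep_S0 0), (ep_SS_app n 0), (ep_S0 n). reflexivity.
      * intros x. rewrite (ep_SS 0 n), (ep_0S n). apply mkfun_ext. intros y.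
        rewrite (ep_0S_app 0 x). reflexivity.
    + destruct (IH k) as [IH1 IH2]. split.
      * intros w. rewrite (ep_SS (S k) k), (ep_SS n k). apply mkfun_ext. intros y.
        rewrite (ep_SS_app n (S k)), IH1, IH2. reflexivity.
      * intros w. rewrite (ep_SS (S k) n), (ep_SS k n). apply mkfun_ext. intros y.
        rewrite (ep_SS_app k (S k)), IH2, IH1. reflexivity.
Qed.

Lemma ep_down_comp n k w : ep (S k) k (ep n (S k) w) = ep n k w.
Proof. apply ep_comp_step. Qed.

Lemma ep_up_comp n k w : ep (S k) n (ep k (S k) w) = ep k n w.
Proof. apply ep_comp_step. Qed.

Lemma ij_ep n :
  (forall x, i_n D bot n x = ep n (S n) x) /\ (forall x, j_n D bot n x = ep (S n) n x).
Proof.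
  induction n as [|n [IH1 IH2]].
  - split; intros x; [reflexivity|]. rewrite ep_S0. reflexivity.
  - split; intros x.
    + change (i_n D bot (S n) x)
        with (mkfun (Dn D (S n)) (fun y => i_n D bot n (app x (j_n D bot n y)))).
      rewrite (ep_SS n (S n)). apply mkfun_ext. intros y. rewrite IH1, IH2. reflexivity.
    + change (j_n D bot (S n) x)
        with (mkfun (Dn D n) (fun y => j_n D bot n (app x (i_n D bot n y)))).
      rewrite (ep_SS (S n) n). apply mkfun_ext. intros y. rewrite IH1, IH2. reflexivity.
Qed.

Lemma j_n_ep n x : j_n D bot n x = ep (S n) n x.
Proof. apply ij_ep. Qed.

Lemma ep_up_down_ord n f : ord (ep n (S n) (ep (S n) n f)) f.
Proof.
  induction n as [|n IH].
  - apply (funp_ord_intro D); intros y. rewrite (ep_0S_app 0), (ep_S0 0).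
    apply app_monotone; auto.
  - apply (funp_ord_intro (Dn D (S n))); intros y. rewrite (ep_SS_app n (S n)), (ep_SS_app (S n) n).
    apply (ord_trans _ (Dn_partial_order (S n)) _ (app f (ep n (S n) (ep (S n) n y)))); [apply IH|].
    apply (app_monotone _ (Dn_partial_order (S n))), IH.
Qed.

Variable p : D -> D -> R.
Variable a : forall n : nat, nat -> Dn D n.
Hypothesis JN0 : bounded_joins D.
Hypothesis QP : quantifies D p.
Hypothesis P01 : forall x y : D, 0 <= p x y <= 1.
Hypothesis BAS : forall n : nat, is_basis (Dn D n) (fun b => exists i : nat, a n i = b).

Lemma pn_scott_adapted n : scott_adapted (Dn D n) (pn D p a n).
Proof.
  induction n as [|n IH].
  - exact (scott_adapted_of_quantifies D p _ PO0 (BAS 0) QP P01).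
  - exact (funp_pm_scott_adapted (Dn D n) (pn D p a n) (a n) (bot_n n) (Dn_partial_order n)
             (Dn_has_dsups n) (Dn_bounded_joins JN0 n)
             (bot_n_least n) (BAS n) IH).
Qed.

Notation DI := (Dinf D bot).

Definition coord (x : DI) (n : nat) : Dn D n := proj1_sig x n.

Lemma coord_succ (x : DI) n : coord x n = ep (S n) n (coord x (S n)).
Proof. unfold coord. rewrite (proj2_sig x n). apply j_n_ep. Qed.

Lemma dinf_ext (x y : DI) : (forall n, coord x n = coord y n) -> x = y.
Proof.
  destruct x as [x Hx], y as [y Hy]. unfold coord; simpl. intros H.
  assert (x = y) by (apply functional_extensionality_dep; auto). subst y.
  f_equal. apply proof_irrelevance.
Qed.

Lemma dinf_ord_intro (x y : DI) : (forall n, ord (coord x n) (coord y n)) -> ord x y.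
Proof. intros H; exact H. Qed.

Lemma dinf_ord_coord (x y : DI) n : ord x y -> ord (coord x n) (coord y n).
Proof. intros H; apply H. Qed.

Lemma dinf_partial_order : is_partial_order DI.
Proof.
  split; [|split].
  - intros x. apply dinf_ord_intro; intros n. apply ord_refl, Dn_partial_order.
  - intros x y H1 H2. apply dinf_ext. intros n.
    apply (ord_antisym _ (Dn_partial_order n)); apply dinf_ord_coord; assumption.
  - intros x y z H1 H2. apply dinf_ord_intro; intros n.
    apply (ord_trans _ (Dn_partial_order n) _ (coord y n)); apply dinf_ord_coord; assumption.
Qed.

Definition coords (A : DI -> Prop) n : Dn D n -> Prop := img (fun x => coord x n) A.

Lemma directed_coords A n : directed DI A -> directed (Dn D n) (coords A n).
Proof.
  intros [[x Hx] Hd]. split.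
  - exists (coord x n), x; auto.
  - intros u v [d1 [H1 ->]] [d2 [H2 ->]]. destruct (Hd d1 d2 H1 H2) as [d3 [H3 [L1 L2]]].
    exists (coord d3 n); split; [exists d3; auto | split; apply dinf_ord_coord; assumption].
Qed.

Lemma dinf_sup_coord A s : directed DI A -> is_sup DI A s ->
  forall n, is_sup (Dn D n) (coords A n) (coord s n).
Proof.
  intros HA Hs.
  set (t := fun n => proj1_sig (constructive_indefinite_description _
              (Dn_has_dsups n _ (directed_coords A n HA)))).
  assert (Ht : forall n, is_sup (Dn D n) (coords A n) (t n)) by (intros n; apply proj2_sig).
  (* The componentwise sups form a thread because each j_n is Scott continuous. *)
  assert (Hthread : forall n, t n = j_n D bot n (t (S n))).
  { intros n. rewrite j_n_ep. apply (is_sup_unique _ (Dn_partial_order n) (coords A n)); [apply Ht|].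
    apply (is_sup_ext (Dn D n)) with (S := img (ep (S n) n) (coords A (S n)));
      [|apply ep_scott_cont; [apply directed_coords | apply Ht]; assumption].
    intros y; split.
    - intros [z [[d [Hd ->]] ->]]. exists d; split; [assumption | symmetry; apply coord_succ].
    - intros [d [Hd ->]]. exists (coord d (S n)); split; [exists d; auto | apply coord_succ]. }
  set (tinf := exist _ t Hthread : DI).
  assert (Htinf : is_sup DI A tinf).
  { split.
    - intros d Hd. apply dinf_ord_intro; intros n. apply (Ht n). exists d; auto.
    - intros u Hu. apply dinf_ord_intro; intros n. apply (Ht n).
      intros y [d [Hd ->]]. apply dinf_ord_coord, Hu, Hd. }
  rewrite (is_sup_unique _ dinf_partial_order A s tinf Hs Htinf). apply Ht.
Qed.

Definition pinf_terms (x y : DI) (k : nat) : R := pn D p a (S k) (coord x (S k)) (coord y (S k)).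

Lemma pinf_wsum x y : pinf D bot p a x y = wsum (pinf_terms x y).
Proof. reflexivity. Qed.

Lemma bounded_pinf_terms x y : bounded_seq (pinf_terms x y).
Proof. apply bounded_seq_unit. intros k. apply (sa_unit _ _ (pn_scott_adapted (S k))). Qed.

Lemma pinf_partial_metric : is_partial_metric DI (pinf D bot p a).
Proof.
  assert (Hpm := fun k => sa_pmetric _ _ (pn_scott_adapted (S k))).
  apply (wsum_partial_metric DI (fun k x y => pinf_terms x y k)).
  - intros k x y. apply (sa_unit _ _ (pn_scott_adapted (S k))).
  - intros k x y. apply (Hpm k).
  - intros k x y. apply (Hpm k).
  - intros k x y z. apply (Hpm k).
  - intros x y H.
    assert (Hsucc : forall k, coord x (S k) = coord y (S k)) by (intros k; apply (Hpm k); apply H).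
    apply dinf_ext. intros [|n]; [rewrite (coord_succ x 0), (coord_succ y 0), Hsucc|]; auto.
Qed.

Lemma pinf_antitone x y z : ord x y -> pinf D bot p a y z <= pinf D bot p a x z.
Proof.
  intros Hxy. rewrite !pinf_wsum. apply wsum_le; auto using bounded_pinf_terms.
  intros k. apply (pn_scott_adapted (S k)), dinf_ord_coord, Hxy.
Qed.

Lemma pinf_sup_approx A s z eps : directed DI A -> is_sup DI A s -> 0 < eps ->
  exists d, A d /\ pinf D bot p a d z < pinf D bot p a s z + eps.
Proof.
  intros HA Hs Heps.
  apply (wsum_directed_approx DI A (fun x => pinf_terms x z)); auto.
  - intros x k. apply (sa_unit _ _ (pn_scott_adapted (S k))).
  - intros k. apply (sa_unit _ _ (pn_scott_adapted (S k))).
  - intros x y k Hxy. apply (pn_scott_adapted (S k)), dinf_ord_coord, Hxy.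
  - intros k e He.
    destruct (sa_sup_approx _ _ (pn_scott_adapted (S k)) _ _ (coord z (S k)) e
                (directed_coords A (S k) HA) (dinf_sup_coord A s HA Hs (S k)) He)
      as [d [[x [Hx ->]] Hd]].
    exists x; split; assumption.
Qed.

Definition iota (n : nat) (w : Dn D n) : DI.
Proof.
  refine (exist _ (fun k => ep n k w) _).
  intros k. rewrite j_n_ep. symmetry. apply ep_down_comp; assumption.
Defined.

Lemma coord_iota n w k : coord (iota n w) k = ep n k w.
Proof. reflexivity. Qed.

Lemma iota_monotone n w w' : ord w w' -> ord (iota n w) (iota n w').
Proof. intros H. apply dinf_ord_intro; intros k. apply ep_monotone; assumption. Qed.

Lemma iota_scott_cont n : scott_cont (Dn D n) DI (iota n).
Proof.
  intros A s HA Hs. split.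
  - intros y [w [Hw ->]]. apply iota_monotone, Hs, Hw.
  - intros u Hu. apply dinf_ord_intro; intros k.
    apply (ep_scott_cont n k A s HA Hs). intros y [w [Hw ->]].
    apply (dinf_ord_coord (iota n w) u k), Hu. exists w; auto.
Qed.

Lemma ep_coord_ord_succ (z : DI) n k :
  ord (ep n k (coord z n)) (ep (S n) k (coord z (S n))).
Proof.
  rewrite (coord_succ z n), <- (ep_up_comp k n).
  apply ep_monotone, ep_up_down_ord; assumption.
Qed.

Lemma ep_coord_ord_up (z : DI) d m k : (m + d = k)%nat -> ord (ep m k (coord z m)) (coord z k).
Proof.
  revert m; induction d as [|d IH]; intros m Hm.
  - rewrite Nat.add_0_r in Hm. subst m. rewrite ep_id. apply ord_refl, Dn_partial_order.
  - apply (ord_trans _ (Dn_partial_order k) _ _ _ (ep_coord_ord_succ z m k)). apply IH. lia.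
Qed.

Lemma ep_coord_ord (z : DI) m k : ord (ep m k (coord z m)) (coord z k).
Proof.
  assert (Hd : forall d k, (m <= k + d)%nat -> ord (ep m k (coord z m)) (coord z k)).
  { induction d as [|d IH]; intros l Hl;
      (destruct (Nat.le_gt_cases m l); [apply (ep_coord_ord_up z (l - m)); lia|]); [exfalso; lia|].
    rewrite <- (ep_down_comp m l), (coord_succ z l).
    apply ep_monotone. apply IH. lia. }
  apply (Hd m). lia.
Qed.

Lemma iota_coord_ord (z : DI) n : ord (iota n (coord z n)) z.
Proof. apply dinf_ord_intro. intros k. apply ep_coord_ord. Qed.

Lemma iota_coord_chain (x : DI) d n : ord (iota n (coord x n)) (iota (d + n) (coord x (d + n))).
Proof.
  induction d as [|d IH]; [apply ord_refl, dinf_partial_order|].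
  apply (ord_trans _ dinf_partial_order _ _ _ IH).
  apply dinf_ord_intro; intros k. apply ep_coord_ord_succ.
Qed.

Lemma iota_coord_directed (x : DI) : directed DI (fun y => exists n, y = iota n (coord x n)).
Proof.
  split; [exists (iota 0 (coord x 0)), 0%nat; reflexivity|].
  intros u v [n ->] [m ->]. exists (iota (m + n) (coord x (m + n))). split; [eauto|].
  split; [apply iota_coord_chain|]. rewrite Nat.add_comm. apply iota_coord_chain.
Qed.

Lemma iota_coord_sup (x : DI) : is_sup DI (fun y => exists n, y = iota n (coord x n)) x.
Proof.
  split; [intros y [n ->]; apply iota_coord_ord|].
  intros u Hu. apply dinf_ord_intro; intros k.
  assert (H := dinf_ord_coord _ _ k (Hu (iota k (coord x k)) (ex_intro _ k eq_refl))).
  rewrite coord_iota, ep_id in H. exact H.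
Qed.

Lemma pinf_p_open_of_scott_open U : scott_open DI U -> p_open DI (pinf D bot p a) U.
Proof.
  intros [Hup Hin] x Hx.
  destruct (Hin _ _ (iota_coord_directed x) (iota_coord_sup x) Hx) as [y [[n ->] Hy]].
  assert (HU : U (iota (S n) (coord x (S n)))) by (apply (Hup _ _ Hy), (iota_coord_chain x 1)).
  destruct (BAS (S n) (coord x (S n))) as [Hd Hs].
  destruct (Hin _ _ (directed_img _ _ (Dn_partial_order (S n)) _ _ (iota_scott_cont (S n)) Hd)
              (iota_scott_cont (S n) _ _ Hd Hs) HU) as [y' [[b [[_ Hb] ->]] Hyb]].
  destruct (sa_way_below _ _ (pn_scott_adapted (S n)) b _ Hb) as [delta [Hdelta Hball]].
  assert (Hr : 0 < (/ 2) ^ S n * delta)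
    by (apply Rmult_lt_0_compat; [apply half_pow_pos | assumption]).
  exists x, ((/ 2) ^ S n * delta). split; [assumption|]. split; [unfold pball; lra|].
  intros z Hz. unfold pball in Hz. rewrite !pinf_wsum in Hz.
  assert (Hbz : ord b (coord z (S n))).
  { apply Hball, (wsum_lt_component (pinf_terms x x) (pinf_terms z x));
      auto using bounded_pinf_terms.
    intros k. destruct (sa_pmetric _ _ (pn_scott_adapted (S k))) as [_ [Hself [_ [Hsym _]]]].
    unfold pinf_terms. rewrite (Hsym (coord z (S k))). apply Hself. }
  apply (Hup _ _ Hyb), (ord_trans _ dinf_partial_order _ (iota (S n) (coord z (S n)))).
  - apply iota_monotone, Hbz.
  - apply iota_coord_ord.
Qed.

Lemma pinf_quantifies : quantifies DI (pinf D bot p a).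
Proof.
  split; [apply pinf_partial_metric|]. intros U. split.
  - apply pinf_p_open_of_scott_open.
  - apply scott_open_of_p_open; [apply pinf_antitone | apply pinf_sup_approx].
Qed.

End InverseLimit.

Theorem mainTheorem8 (D : Poset) (p : D -> D -> R) (bot : D)
  (a : forall n : nat, nat -> Dn D n) :
  is_domain D ->
  bounded_complete D ->
  (forall x : D, ord bot x) ->
  quantifies D p ->
  (forall x y : D, 0 <= p x y <= 1) ->
  (forall n : nat, is_basis (Dn D n) (fun b => exists i : nat, a n i = b)) ->
  quantifies (Dinf D bot) (pinf D bot p a).
Proof.
  intros [[PO DC] _] BC BOT QP P01 BAS.
  exact (pinf_quantifies D bot PO DC BOT p a (bounded_joins_of_bounded_complete D BC) QP P01 BAS).
Qed.
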